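(* A connected graph $G$ belongs to DH $\cap$ co-DH if and only if $G$ admits a sequence of twin eliminations ending in a graph isomorphic to an induced subgraph of the Bull.
   Context: All graphs are finite and simple. A graph is distance-hereditary if it has no induced subgraph isomorphic to a hole (an induced cycle of length at least $5$), the house (a $5$-cycle plus one chord), the domino (a $6$-cycle $v_1\dots v_6$ plus the chord $v_1v_4$), or the gem ($P_4$ plus a vertex adjacent to all four of its vertices). DH $\cap$ co-DH is the class of graphs $G$ such that both $G$ and its complement are distance-hereditary. Two distinct vertices $u,v$ are twins if $N(u)\setminus\{u,v\}=N(v)\setminus\{u,v\}$. A sequence of twin eliminations from $G$ to $H$ is a sequence $G=G_0,G_1,\dots,G_k=H$ ($k\ge 0$) where each $G_{i+1}=G_i-v_i$ for some vertex $v_i$ of $G_i$ having a twin in $G_i$. The Bull is the graph on vertices $a,b,c,d,e$ with edges $ab,bc,ca,ad,be$. *)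

(* Finite simple graphs: a finType of vertices with a
   symmetric irreflexive boolean adjacency relation. *)
From mathcomp Require Import all_boot.
Set Implicit Arguments. Unset Strict Implicit. Unset Printing Implicit Defensive.

Definition compl (T : finType) (e : rel T) : rel T :=
  fun x y => (x != y) && ~~ e x y.

Definition connected_graph (T : finType) (e : rel T) : Prop :=
  (0 < #|T|) /\ forall x y : T, connect e x y.

Definition has_induced (U : finType) (h : rel U) (T : finType) (e : rel T) : Prop :=
  exists f : U -> T, injective f /\ forall x y, e (f x) (f y) = h x y.

Definition edges_rel (n : nat) (E : seq (nat * nat)) : rel 'I_n :=
  fun i j => ((val i, val j) \in E) || ((val j, val i) \in E).
Arguments edges_rel : clear implicits.

Definition cycle_rel (n : nat) : rel 'I_n :=
  fun i j => (val j == (val i).+1 %% n) || (val i == (val j).+1 %% n).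
Arguments cycle_rel : clear implicits.

Definition house : rel 'I_5 :=
  edges_rel 5 [:: (0,1); (1,2); (2,3); (3,4); (4,0); (0,2)].
(* 6-cycle v1..v6 (here 0..5) plus chord v1v4 (here 0-3) *)
Definition domino : rel 'I_6 :=
  edges_rel 6 [:: (0,1); (1,2); (2,3); (3,4); (4,5); (5,0); (0,3)].
(* P4 0-1-2-3 plus vertex 4 adjacent to all *)
Definition gem : rel 'I_5 :=
  edges_rel 5 [:: (0,1); (1,2); (2,3); (4,0); (4,1); (4,2); (4,3)].
(* Bull: a=0, b=1, c=2, d=3, e=4; edges ab, bc, ca, ad, be *)
Definition bull : rel 'I_5 :=
  edges_rel 5 [:: (0,1); (1,2); (2,0); (0,3); (1,4)].

Definition distance_hereditary (T : finType) (e : rel T) : Prop :=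
  (forall n, 5 <= n -> ~ has_induced (cycle_rel n) e) /\
  ~ has_induced house e /\ ~ has_induced domino e /\ ~ has_induced gem e.

Definition twins_in (T : finType) (e : rel T) (S : {set T}) (u v : T) : bool :=
  [&& u \in S, v \in S, u != v &
   [forall w in S, (w != u) ==> (w != v) ==> (e u w == e v w)]].

Inductive twin_elim (T : finType) (e : rel T) : {set T} -> {set T} -> Prop :=
  | twin_elim_refl S : twin_elim e S S
  | twin_elim_step S S' v u :
      twins_in e S v u -> twin_elim e (S :\ v) S' -> twin_elim e S S'.

Definition iso_induced_sub (T : finType) (e : rel T) (S : {set T})
  (U : finType) (h : rel U) : Prop :=
  exists f : T -> U, {in S &, injective f} /\
    {in S &, forall x y, h (f x) (f y) = e x y}.

From mathcomp Require Import all_boot zify.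
Set Implicit Arguments. Unset Strict Implicit. Unset Printing Implicit Defensive.

(* Twin eliminations preserve the absence of an induced copy of a twin-free graph
   [F]: such a copy cannot contain both twins, and the eliminated twin can be
   replaced by the remaining one.  Holes, the house, the domino and the gem are
   twin-free, and neither the bull nor its complement contains any of them.

   Conversely, eliminate twins until the graph is twin-free.  A twin-free graph on
   two or more vertices contains an induced P4, because a P4-free graph or its
   complement is disconnected and twin-freeness passes to modules.  A finite check
   of the graphs formed by the P4 and one or two further vertices, using only that
   the graph and its complement contain no C5, house or gem, shows that every other
   vertex is adjacent exactly to the two middle vertices of the P4: otherwise it
   mimics a vertex of the P4, and these mimics form a nontrivial module, which would
   extend a P4 to a gem or a co-gem.  Two such vertices would again form a module,
   so the graph is the P4 or the bull. *)

(** * Cographs and modules *)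

Section Cographs.
Variable T : finType.
Implicit Types (e : rel T) (S M A : {set T}).

Lemma compl_sym e : symmetric e -> symmetric (compl e).
Proof. by move=> eS x y; rewrite /compl eq_sym eS. Qed.

Lemma compl_irr e : irreflexive (compl e).
Proof. by move=> x; rewrite /compl eqxx. Qed.

Definition twinfree_in e S := forall u v, ~~ twins_in e S u v.

Lemma card2_twins e S : #|S| = 2 -> exists u v, twins_in e S u v.
Proof.
move/eqP=> /cards2P [u [v [Huv ->]]]; exists u, v; rewrite /twins_in !inE !eqxx orbT Huv /=.
by apply/forallP => w; apply/implyP; rewrite !inE => /orP [] /eqP ->; rewrite eqxx //= implybT.
Qed.

Definition is_module e S M :=
  M \subset S /\ forall y y' z, y \in M -> y' \in M -> z \in S -> z \notin M -> e y z = e y' z.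

Lemma twinfree_in_module e S M : is_module e S M -> twinfree_in e S -> twinfree_in e M.
Proof.
move=> [HMS HM] Htf u v; apply/negP => /and4P [Hu Hv Huv /forall_inP H].
move/negP: (Htf u v); apply; rewrite /twins_in !(subsetP HMS) // Huv /=.
apply/forall_inP => w Hw; case: (boolP (w \in M)) => [/H // | HwM].
by rewrite (HM u v w) ?eqxx ?implybT.
Qed.

Definition induced_P4 e a b c d := [&& e a b, e b c, e c d, ~~ e a c, ~~ e a d & ~~ e b d].

Definition has_P4 e S :=
  [exists a in S, exists b in S, exists c in S, exists d in S, induced_P4 e a b c d].

Lemma has_P4P e S : reflect
  (exists a b c d, [/\ a \in S, b \in S, c \in S, d \in S & induced_P4 e a b c d])
  (has_P4 e S).
Proof.
apply: (iffP idP).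
  case/exists_inP=> a Ha /exists_inP [b Hb /exists_inP [c Hc /exists_inP [d Hd H]]].
  by exists a, b, c, d.
case=> a [b [c [d [Ha Hb Hc Hd H]]]].
by apply/exists_inP; exists a => //; apply/exists_inP; exists b => //;
  apply/exists_inP; exists c => //; apply/exists_inP; exists d.
Qed.

Lemma induced_P4_uniq e a b c d : symmetric e -> irreflexive e ->
  induced_P4 e a b c d -> uniq [:: a; b; c; d].
Proof.
move=> eS eI /and5P [h1 h2 h3 h4 /andP [h5 h6]].
have ab : a != b by apply/eqP => E; rewrite E eI in h1.
have bc : b != c by apply/eqP => E; rewrite E eI in h2.
have cd : c != d by apply/eqP => E; rewrite E eI in h3.
have ac : a != c by apply/eqP => E; rewrite E h3 in h5.
have ad : a != d by apply/eqP => E; rewrite E eS in h1; rewrite h1 in h6.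
have bd : b != d by apply/eqP => E; rewrite -E h1 in h5.
by rewrite /= !inE !negb_or ab ac ad bc bd cd.
Qed.

Lemma has_P4S e S S' : S' \subset S -> has_P4 e S' -> has_P4 e S.
Proof.
move=> /subsetP sS' /has_P4P [a [b [c [d [Ha Hb Hc Hd H]]]]].
by apply/has_P4P; exists a, b, c, d; split; rewrite ?sS'.
Qed.

Lemma induced_P4_compl e a b c d : symmetric e ->
  induced_P4 (compl e) a b c d -> induced_P4 e b d a c.
Proof.
move=> eS /and5P [h1 h2 h3 h4 /andP [h5 h6]].
have ac : a != c by apply/eqP => E; subst c; rewrite h3 in h5.
have ad : a != d by apply/eqP => E; subst d; rewrite (compl_sym eS) h1 in h6.
have bd : b != d by apply/eqP => E; subst d; rewrite h1 in h5.
move: h1 h2 h3 h4 h5 h6; rewrite /compl /induced_P4 ac ad bd /= !negbK.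
move=> /andP [_ h1] /andP [_ h2] /andP [_ h3] h4 h5 h6.
by rewrite h6 (eS d a) h5 h4 (eS b a) h1 h2 (eS d c) h3.
Qed.

Lemma has_P4_compl e S : symmetric e -> has_P4 (compl e) S -> has_P4 e S.
Proof.
move=> eS /has_P4P [a [b [c [d [Ha Hb Hc Hd H]]]]].
by apply/has_P4P; exists b, d, a, c; split=> //; apply: induced_P4_compl.
Qed.

(* [A] is completely joined ([b = true]) or completely non-joined ([b = false]) to
   the rest of [S], so that the complement of [e] or [e] is disconnected on [S]. *)
Definition uniform_cut e S A b := [/\ A \subset S, A != set0, ~~ (S \subset A) &
  forall a x, a \in A -> x \in S -> x \notin A -> e a x = b].

Lemma uniform_cut_compl e S A b : uniform_cut (compl e) S A b -> uniform_cut e S A (~~ b).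
Proof.
case=> H1 H2 H3 H4; split=> // a x Ha Hx HxA; have Hax : a != x by apply: contraNneq HxA => <-.
by rewrite -(H4 a x) // /compl Hax negbK.
Qed.

Lemma uniform_cut_modules e S A b : symmetric e -> uniform_cut e S A b ->
  is_module e S A /\ is_module e S (S :\: A).
Proof.
move=> eS [HAS _ _ HA]; split; first by split=> // y y' z Hy Hy' Hz Hzn; rewrite !HA.
split; first exact: subsetDl.
move=> y y' z; rewrite !inE => /andP [Hy1 Hy2] /andP [Hy'1 Hy'2] Hz; rewrite Hz andbT negbK => Hz'.
by rewrite eS (HA z y) // (eS y') (HA z y').
Qed.

Lemma uniform_cut_universal e S v : v \in S -> S :\ v != set0 ->
  [forall x in S :\ v, e v x] -> uniform_cut e S [set v] true.
Proof.
move=> HvS /set0Pn [a /setD1P [Hav HaS]] Hall; split.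
- by rewrite sub1set.
- by apply/set0Pn; exists v; rewrite inE.
- by apply/subsetPn; exists a; rewrite // inE.
move=> b x; rewrite inE => /eqP -> Hx Hxv; apply: (forall_inP Hall).
by rewrite !inE Hx andbT; rewrite inE in Hxv.
Qed.

Lemma uniform_cut_of_split e S v X Y u w : symmetric e -> v \in S -> X :|: Y = S :\ v ->
  (forall x y, x \in X -> y \in Y -> ~~ e x y) ->
  u \in X -> ~~ e v u -> w \in Y -> e v w -> ~~ has_P4 e S ->
  exists A b, uniform_cut e S A b.
Proof.
move=> eS HvS HXY Hanti Hu Hvu Hw Hvw Hno.
have HX x : x \in X -> x \in S :\ v by rewrite -HXY inE => ->.
have HY x : x \in Y -> x \in S :\ v by rewrite -HXY inE orbC => ->.
exists [set x in X | ~~ e v x], false; split.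
- by apply/subsetP => x; rewrite inE => /andP [/HX /setD1P []].
- by apply/set0Pn; exists u; rewrite inE Hu.
- by apply/subsetPn; exists v; rewrite // inE; apply/negP => /andP [/HX]; rewrite !inE eqxx.
move=> a x; rewrite inE => /andP [Ha Hva] Hx Hxn.
have [->|Hxv] := eqVneq x v; first by rewrite eS (negbTE Hva).
have : x \in X :|: Y by rewrite HXY !inE Hxv.
rewrite inE => /orP [HxX|HxY]; last exact/negbTE/Hanti.
move: Hxn; rewrite inE HxX negbK => Hvx.
(* otherwise [a - x - v - w] is an induced P4 *)
apply/negbTE/negP => Hax; move/negP: Hno; apply; apply/has_P4P.
have /setD1P [_ HaS] := HX a Ha; have /setD1P [_ HwS] := HY w Hw.
exists a, x, v, w; split=> //.
by rewrite /induced_P4 Hax (eS x v) Hvx Hvw (eS a v) Hva (Hanti a w Ha Hw) (Hanti x w HxX Hw).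
Qed.

Lemma uniform_cut_extend e S v A : symmetric e -> v \in S ->
  uniform_cut e (S :\ v) A false -> ~~ has_P4 e S -> exists A' b, uniform_cut e S A' b.
Proof.
move=> eS HvS [HAS HA0 HAn HA] Hno.
have HAS' x : x \in A -> x \in S :\ v by apply: (subsetP HAS).
have [Hall|] := boolP [forall x in S :\ v, e v x].
  exists [set v], true; apply: uniform_cut_universal => //.
  by case/set0Pn: HA0 => a /HAS' Ha; apply/set0Pn; exists a.
case/forall_inPn=> u HuS Hvu.
have [HnA|] := boolP [forall a in A, ~~ e v a].
  exists A, false; split => //.
  - by apply: (subset_trans HAS); apply: subsetDl.
  - by apply/subsetPn; exists v => //; apply/negP => /HAS'; rewrite !inE eqxx.
  move=> a x Ha Hx HxA; have [->|Hxv] := eqVneq x v.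
    by rewrite eS; apply/negbTE/(forall_inP HnA).
  by apply: HA => //; rewrite in_setD1 Hxv.
case/forall_inPn=> a0 Ha0; rewrite negbK => Hva0.
set B := (S :\ v) :\: A.
have HAB : A :|: B = S :\ v by rewrite -[RHS](setID (S :\ v) A) (setIidPr HAS).
have Hanti x y : x \in A -> y \in B -> ~~ e x y.
  by move=> Hx /setDP [Hy HyA]; rewrite HA.
have [HnB|] := boolP [forall b in B, ~~ e v b].
  exists (v |: A), false; split.
  - by rewrite subUset sub1set HvS (subset_trans HAS) // subsetDl.
  - by apply/set0Pn; exists v; rewrite !inE eqxx.
  - case/subsetPn: HAn => x /setD1P [Hxv HxS] HxA.
    by apply/subsetPn; exists x; rewrite // !inE negb_or Hxv.
  move=> a x; rewrite !inE negb_or => /orP [/eqP ->|Ha] Hx /andP [Hxv HxA].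
    by apply/negbTE/(forall_inP HnB); rewrite !inE Hxv Hx HxA.
  by apply: HA => //; rewrite in_setD1 Hxv.
case/forall_inPn=> b0 Hb0; rewrite negbK => Hvb0.
have : u \in A :|: B by rewrite HAB.
rewrite inE => /orP [HuA|HuB].
  exact: (uniform_cut_of_split eS HvS HAB Hanti HuA Hvu Hb0 Hvb0 Hno).
apply: (uniform_cut_of_split eS HvS _ _ HuB Hvu Ha0 Hva0 Hno); first by rewrite setUC.
by move=> x y Hx Hy; rewrite eS; apply: Hanti.
Qed.

Lemma P4_free_uniform_cut e S : symmetric e -> 1 < #|S| -> ~~ has_P4 e S ->
  exists A b, uniform_cut e S A b.
Proof.
move=> eS HS1; have [n HS] : exists n, #|S| = n.+2 by exists #|S|.-2; lia.
clear HS1; elim: n S HS => [|n IH] S HS Hno.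
  move/eqP: HS => /cards2P [x [y [Hxy ->]]].
  exists [set x], (e x y); split.
  - by rewrite sub1set !inE eqxx.
  - by apply/set0Pn; exists x; rewrite inE.
  - by apply/subsetPn; exists y; rewrite !inE ?eqxx ?orbT // eq_sym.
  by move=> a b; rewrite !inE => /eqP -> /orP [] /eqP -> //; rewrite eqxx.
have [v Hv] : exists v, v \in S by apply/card_gt0P; rewrite HS.
have HS' : #|S :\ v| = n.+2 by move: HS; rewrite (cardsD1 v) Hv => [[]].
have Hno' : ~~ has_P4 e (S :\ v) by apply: contra Hno; apply: has_P4S; apply: subsetDl.
have [A' [[] Hcut]] := IH _ HS' Hno'; last exact: (uniform_cut_extend eS Hv Hcut Hno).
have Hcut' : uniform_cut (compl e) (S :\ v) A' false.
  by case: Hcut => H1 H2 H3 H4; split=> // a b Ha Hb Hba; rewrite /compl H4 // andbF.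
have Hno_c : ~~ has_P4 (compl e) S by apply: contra Hno; apply: has_P4_compl.
have [A [b /uniform_cut_compl]] := uniform_cut_extend (compl_sym eS) Hv Hcut' Hno_c.
by exists A, (~~ b).
Qed.

Lemma twinfree_has_P4 e S : symmetric e -> twinfree_in e S -> 1 < #|S| -> has_P4 e S.
Proof.
move=> eS; have [n] := ubnP #|S|; elim: n S => // n IH S HSn Htf HS1.
apply: contraT => Hno.
have [A [b Hcut]] := P4_free_uniform_cut eS HS1 Hno.
have [HmA HmB] := uniform_cut_modules eS Hcut.
case: Hcut => HAS /set0Pn [a Ha] /subsetPn [x HxS HxA] _.
have Hcard : #|A| + #|S :\: A| = #|S| by rewrite -(cardsID A S) (setIidPr HAS).
have HA0 : 0 < #|A| by apply/card_gt0P; exists a.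
have HB0 : 0 < #|S :\: A| by apply/card_gt0P; exists x; rewrite inE HxA.
case: (ltnP 1 #|A|) => HA1.
  have : has_P4 e A by apply: IH (twinfree_in_module HmA Htf) HA1; lia.
  by move/(has_P4S HAS); rewrite (negbTE Hno).
case: (ltnP 1 #|S :\: A|) => HB1.
  have : has_P4 e (S :\: A) by apply: IH (twinfree_in_module HmB Htf) HB1; lia.
  by move/(has_P4S (subsetDl S A)); rewrite (negbTE Hno).
have [u [v Htw]] : exists u v, twins_in e S u v by apply: card2_twins; lia.
by move: (Htf u v); rewrite Htw.
Qed.

End Cographs.

(** * Twin eliminations *)

Definition twinfree_rel (U : finType) (F : rel U) :=
  forall a b, a != b -> exists w, [/\ w != a, w != b & F a w != F b w].

Definition cyc_succ n x := if x.+1 == n then 0 else x.+1.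
Definition cyc_pred n x := if x == 0 then n.-1 else x.-1.

Lemma cyc_succ_lt n x : x < n -> cyc_succ n x < n. Proof. by rewrite /cyc_succ; case: eqP; lia. Qed.
Lemma cyc_pred_lt n x : x < n -> cyc_pred n x < n. Proof. by rewrite /cyc_pred; case: eqP; lia. Qed.

Lemma cyc_succE n x : x < n -> x.+1 %% n = cyc_succ n x.
Proof.
move=> Hx; rewrite /cyc_succ; case: eqP => [->|H]; first by rewrite modnn.
by rewrite modn_small //; lia.
Qed.

Lemma eq_cyc_succ n x y : x < n -> y < n -> (x == cyc_succ n y) = (y == cyc_pred n x).
Proof.
move=> Hx Hy; rewrite /cyc_succ /cyc_pred.
case: (y.+1 =P n); case: (x =P 0); case: (x =P y.+1); case: (y =P n.-1); case: (y =P x.-1);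
  intros; try done; exfalso; lia.
Qed.

Lemma cycle_relE n (i j : 'I_n) :
  cycle_rel n i j = (val j == cyc_succ n i) || (val j == cyc_pred n i).
Proof.
rewrite /cycle_rel !cyc_succE ?ltn_ord //; congr orb.
by apply: eq_cyc_succ; apply: ltn_ord.
Qed.

(* The two neighbours of [a] distinguish [a] from any [b]. *)
Lemma cycle_twinfree n : 5 <= n -> twinfree_rel (cycle_rel n).
Proof.
move=> Hn a b Hab.
pose s := Ordinal (cyc_succ_lt (ltn_ord a)); pose t := Ordinal (cyc_pred_lt (ltn_ord a)).
have [Es Et] : cycle_rel n a s /\ cycle_rel n a t by split; rewrite cycle_relE eqxx ?orbT.
have [/and3P [Hsa Hsb Hbs]|Hs] := boolP [&& s != a, s != b & ~~ cycle_rel n b s].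
  by exists s; rewrite Es (negbTE Hbs).
have [/and3P [Hta Htb Hbt]|Ht] := boolP [&& t != a, t != b & ~~ cycle_rel n b t].
  by exists t; rewrite Et (negbTE Hbt).
exfalso; move: Hab Hs Ht; rewrite !cycle_relE -!val_eqE /s /t /= /cyc_succ /cyc_pred.
move: (ltn_ord a) (ltn_ord b); clear s t Es Et; move: (val a) (val b) => {}a {}b Ha Hb.
by case: (a.+1 =P n); case: (b.+1 =P n); case: (a =P 0); case: (b =P 0); lia.
Qed.

Lemma twins_in_compl (T : finType) (e : rel T) S v u :
  twins_in e S v u -> twins_in (compl e) S v u.
Proof.
case/and4P=> HvS HuS Hvu /forall_inP Htw; rewrite /twins_in HvS HuS Hvu /=.
apply/forall_inP => w Hw; apply/implyP => Hwv; apply/implyP => Hwu.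
by move: (Htw w Hw); rewrite Hwv Hwu /compl => /eqP ->; rewrite ![_ == w]eq_sym Hwv Hwu.
Qed.

Section TwinExtension.
Variables (T U : finType) (F : rel U).
Hypothesis F_tf : twinfree_rel F.

Definition no_induced_in (g : rel T) (S : {set T}) := forall f : U -> T, injective f ->
  (forall x, f x \in S) -> ~ (forall x y, g (f x) (f y) = F x y).

(* An induced copy of the twin-free [F] cannot use both twins, and if it uses [v]
   then [u] can replace it. *)
Lemma no_induced_in_twin (g : rel T) S v u : symmetric g -> irreflexive g ->
  twins_in g S v u -> no_induced_in g (S :\ v) -> no_induced_in g S.
Proof.
move=> gS gI /and4P [HvS HuS Hvu /forall_inP Htw] Hno f finj fS Hf.
have Htw' w : w \in S -> w != v -> w != u -> g v w = g u w.
  by move=> Hw Hwv Hwu; move: (Htw w Hw); rewrite Hwv Hwu => /eqP.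
case: (pickP (fun a => f a == v)) => [a /eqP Ha | Hnv]; last first.
  by apply: (Hno f finj) => // x; rewrite in_setD1 fS andbT (Hnv x).
case: (pickP (fun b => f b == u)) => [b /eqP Hb | Hnu].
  have Hab : a != b by apply: contraNneq Hvu => Eab; rewrite -Ha -Hb Eab.
  case: (F_tf Hab) => w [Hwa Hwb]; apply/negP; apply/negPn/eqP.
  by rewrite -!Hf Ha Hb Htw' // -?Ha -?Hb (inj_eq finj).
pose f' x := if x == a then u else f x.
have Hfy y : y != a -> [/\ f y \in S, f y != v & f y != u].
  by move=> Hya; rewrite fS -Ha (inj_eq finj) Hya (Hnu y).
apply: (Hno f').
- move=> x y; rewrite /f'; case: (eqVneq x a) => [->|Hxa]; case: (eqVneq y a) => [->|Hya] //.
  + by move=> E; case: (Hfy y Hya) => _ _; rewrite -E eqxx.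
  + by move=> E; case: (Hfy x Hxa) => _ _; rewrite E eqxx.
  + exact: finj.
- move=> x; rewrite /f'; case: (eqVneq x a) => [_|Hxa]; first by rewrite in_setD1 HuS eq_sym Hvu.
  by case: (Hfy x Hxa) => H1 H2 _; rewrite in_setD1 H1 H2.
move=> x y; rewrite /f'; case: (eqVneq x a) => [->|Hxa]; case: (eqVneq y a) => [->|Hya].
- by rewrite -Hf Ha !gI.
- by case: (Hfy y Hya) => H1 H2 H3; rewrite -Hf Ha Htw'.
- by case: (Hfy x Hxa) => H1 H2 H3; rewrite -Hf Ha [g (f x) u]gS [g (f x) v]gS Htw'.
- exact: Hf.
Qed.

Lemma twin_elim_no_induced (e g : rel T) S S' : symmetric g -> irreflexive g ->
  (forall S v u, twins_in e S v u -> twins_in g S v u) ->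
  twin_elim e S S' -> no_induced_in g S' -> no_induced_in g S.
Proof.
move=> gS gI Htr; elim=> [//| S0 S1 v u Htw _ IH] H.
by apply: (no_induced_in_twin gS gI (Htr _ _ _ Htw)); apply: IH.
Qed.

Lemma iso_bull_no_induced (e : rel T) S : iso_induced_sub e S bull ->
  ~ has_induced F bull -> ~ has_induced F (compl bull) ->
  no_induced_in e S /\ no_induced_in (compl e) S.
Proof.
move=> [g [ginj gH]] Hb1 Hb2; split=> f finj fS Hf.
  apply: Hb1; exists (g \o f); split; first by move=> x y /ginj E; apply/finj/E; rewrite fS.
  by move=> x y; rewrite /= gH ?fS.
apply: Hb2; exists (g \o f); split; first by move=> x y /ginj E; apply/finj/E; rewrite fS.
by move=> x y; rewrite -Hf /compl /= (inj_in_eq ginj) ?fS // gH ?fS.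
Qed.

Lemma twin_elim_bull_no_induced (e : rel T) S : symmetric e -> irreflexive e ->
  twin_elim e [set: T] S -> iso_induced_sub e S bull ->
  ~ has_induced F bull -> ~ has_induced F (compl bull) ->
  ~ has_induced F e /\ ~ has_induced F (compl e).
Proof.
move=> eS eI Hel Hiso Hb1 Hb2; have [N1 N2] := iso_bull_no_induced Hiso Hb1 Hb2.
have M1 := twin_elim_no_induced eS eI (fun _ _ _ H => H) Hel N1.
have M2 := twin_elim_no_induced (compl_sym eS) (@compl_irr _ e) (@twins_in_compl _ e) Hel N2.
by split=> -[f [finj Hf]]; [apply: (M1 f finj) | apply: (M2 f finj)] => // x; apply: in_setT.
Qed.

End TwinExtension.

(** * Finite checks on adjacency matrices *)

(* [||] and [&&] do not short-circuit under [vm_compute], whence these variants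
   of [has] and [all]. *)
Fixpoint has_lazy {A} (p : A -> bool) (s : seq A) : bool :=
  if s is x :: s' then (if p x then true else has_lazy p s') else false.
Fixpoint all_lazy {A} (p : A -> bool) (s : seq A) : bool :=
  if s is x :: s' then (if p x then all_lazy p s' else false) else true.

Lemma has_lazyE A (p : A -> bool) s : has_lazy p s = has p s.
Proof. by elim: s => //= x s ->; case: (p x). Qed.
Lemma all_lazyE A (p : A -> bool) s : all_lazy p s = all p s.
Proof. by elim: s => //= x s ->; case: (p x). Qed.
Arguments has_lazy : simpl never.
Arguments all_lazy : simpl never.

Definition mx_entry (M : seq (seq bool)) i j := nth false (nth [::] M i) j.
Definition nat_matrix n (F : nat -> nat -> bool) :=
  [seq [seq F i j | j <- iota 0 n] | i <- iota 0 n].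
Definition compl_matrix (M : seq (seq bool)) :=
  [seq [seq (i != j) && ~~ mx_entry M i j | j <- iota 0 (size M)] | i <- iota 0 (size M)].

Lemma mx_entry_nat_matrix n F i j : i < n -> j < n -> mx_entry (nat_matrix n F) i j = F i j.
Proof.
move=> Hi Hj; rewrite /mx_entry /nat_matrix (nth_map 0) ?size_iota // (nth_map 0) ?size_iota //.
by rewrite !nth_iota.
Qed.

Lemma mx_entry_compl M i j : i < size M -> j < size M ->
  mx_entry (compl_matrix M) i j = (i != j) && ~~ mx_entry M i j.
Proof.
move=> Hi Hj; rewrite {1}/mx_entry /compl_matrix.
rewrite (nth_map 0) ?size_iota // (nth_map 0) ?size_iota //.
by rewrite !nth_iota.
Qed.

Definition edges_nat (E : seq (nat * nat)) (i j : nat) := ((i, j) \in E) || ((j, i) \in E).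
Definition C5_nat (i j : nat) := (j == i.+1 %% 5) || (i == j.+1 %% 5).
Definition house_nat := edges_nat [:: (0,1); (1,2); (2,3); (3,4); (4,0); (0,2)].
Definition gem_nat := edges_nat [:: (0,1); (1,2); (2,3); (4,0); (4,1); (4,2); (4,3)].
Definition domino_nat := edges_nat [:: (0,1); (1,2); (2,3); (3,4); (4,5); (5,0); (0,3)].
Definition bull_nat := edges_nat [:: (0,1); (1,2); (2,0); (0,3); (1,4)].

Definition forbidden5 :=
  [:: nat_matrix 5 C5_nat; nat_matrix 5 house_nat; nat_matrix 5 gem_nat].

Definition induces_at M P (p : seq nat) :=
  all_lazy (fun i => all_lazy (fun j =>
    mx_entry M (nth 0 p i) (nth 0 p j) == mx_entry P i j) (iota 0 5)) (iota 0 5).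

Definition index_seq5 n (p : seq nat) := [&& uniq p, size p == 5 & all (fun i => i < n) p].

(* Enough index sequences to meet every 5-subset of a 5- or 6-vertex matrix. *)
Definition index_seqs5 n :=
  if n == 5 then permutations (iota 0 5)
  else flatten [seq permutations (rem j (iota 0 n)) | j <- iota 0 n].

Definition has_forbidden5_at cs M :=
  has_lazy (fun p => if index_seq5 (size M) p then
    has_lazy (fun P => if induces_at M P p then true else induces_at (compl_matrix M) P p)
      forbidden5 else false) cs.
Definition has_forbidden5 M := has_forbidden5_at (index_seqs5 (size M)) M.

Fixpoint all_bitseqs (n : nat) (P : seq bool -> bool) : bool :=
  if n is n'.+1 then
    (if all_bitseqs n' (fun s => P (true :: s)) then all_bitseqs n' (fun s => P (false :: s))
     else false)
  else P [::].

Lemma all_bitseqsP n P : all_bitseqs n P -> forall s, size s = n -> P s.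
Proof.
elim: n P => [|n IH] P /=; first by move=> H [].
case E: (all_bitseqs _ _) => // H [|b s] //= [Hs].
by case: b; [apply: (IH _ E) | apply: (IH _ H)].
Qed.

(* Configurations around an induced P4 [0 - 1 - 2 - 3]: the extra vertices 4 and 5
   have neighbourhood patterns [bx] and [bz] on the P4 and are joined iff [b]. *)
Definition P4_matrix := [:: [:: false; true; false; false]; [:: true; false; true; false];
  [:: false; true; false; true]; [:: false; false; true; false]].
Definition P4_plus1 bx :=
  [seq nth [::] P4_matrix k ++ [:: nth false bx k] | k <- iota 0 4] ++ [:: bx ++ [:: false]].
Definition P4_plus2 bx bz (b : bool) :=
  [seq nth [::] P4_matrix k ++ [:: nth false bx k; nth false bz k] | k <- iota 0 4] ++
  [:: bx ++ [:: false; b]; bz ++ [:: b; false]].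

(* The patterns of a false and of a true twin of the P4 vertex [i]. *)
Definition twin_patterns i :=
  let r := nth [::] P4_matrix i in [:: set_nth false r i false; set_nth false r i true].
Definition bull_pattern := [:: false; true; true; false].

Lemma twin_patterns_off_diag i j s : i < 4 -> j < 4 -> s \in twin_patterns i -> i != j ->
  nth false s j = mx_entry P4_matrix i j.
Proof.
have : all (fun i => all (fun j => all (fun s =>
    (i == j) || (nth false s j == mx_entry P4_matrix i j))
  (twin_patterns i)) (iota 0 4)) (iota 0 4).
  by vm_compute.
move=> /allP /(_ i) + Hi Hj Hs Hij; rewrite mem_iota Hi => /(_ erefl) /allP /(_ j).
by rewrite mem_iota Hj => /(_ erefl) /allP /(_ s Hs); rewrite (negbTE Hij) => /eqP.
Qed.

Lemma P4_plus1_uniform b : has_forbidden5 (P4_plus1 [:: b; b; b; b]).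
Proof. by case: b; vm_compute. Qed.

Lemma P4_plus1_cases bx : size bx = 4 -> ~~ has_forbidden5 (P4_plus1 bx) ->
  bx = bull_pattern \/ exists2 i, i < 4 & bx \in twin_patterns i.
Proof.
have : all_bitseqs 4 (fun bx => if has_forbidden5 (P4_plus1 bx) then true
   else (bx == bull_pattern) || has (fun i => bx \in twin_patterns i) (iota 0 4)).
  by vm_compute.
move=> /all_bitseqsP H Hx /negbTE Hb; move: (H _ Hx); rewrite Hb.
case/orP=> [/eqP ->|/hasP [i]]; first by left.
by rewrite mem_iota => /andP [_ Hi] Hti; right; exists i.
Qed.

Lemma P4_plus2_twin bx bz b i : size bx = 4 -> size bz = 4 -> i < 4 ->
  bx \in twin_patterns i -> bz \notin twin_patterns i ->
  ~~ has_forbidden5 (P4_plus2 bx bz b) -> b = nth false bz i.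
Proof.
have : let cs := index_seqs5 6 in all_bitseqs 9 (fun s =>
  let bx := take 4 s in let bz := take 4 (drop 4 s) in let b := nth false s 8 in
  all_lazy (fun i => if bx \in twin_patterns i then
      if bz \in twin_patterns i then true
      else if has_forbidden5_at cs (P4_plus2 bx bz b) then true else b == nth false bz i
    else true) (iota 0 4)).
  by vm_compute.
move=> /all_bitseqsP /(_ (bx ++ bz ++ [:: b])) + Hx Hz Hi Hbx Hbz /negbTE Hb.
rewrite !size_cat Hx Hz => /(_ erefl).
rewrite take_size_cat // drop_size_cat // take_size_cat // nth_cat Hx /= nth_cat Hz /=.
have Hi' : i \in iota 0 4 by rewrite mem_iota.
rewrite all_lazyE => /allP /(_ i Hi'); rewrite Hbx (negbTE Hbz).
by move: Hb; rewrite /has_forbidden5 size_cat size_map size_iota => -> /eqP.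
Qed.

Definition twinfree_nat m (Fn : nat -> nat -> bool) :=
  all (fun a => all (fun b => (a == b) ||
    has (fun w => [&& w != a, w != b & Fn a w != Fn b w]) (iota 0 m)) (iota 0 m)) (iota 0 m).

Lemma twinfree_natP m (F : rel 'I_m) (Fn : nat -> nat -> bool) :
  (forall a b : 'I_m, F a b = Fn a b) -> twinfree_nat m Fn -> twinfree_rel F.
Proof.
move=> HF /allP Htf a b Hab.
move: (Htf a); rewrite mem_iota ltn_ord => /(_ erefl) /allP /(_ b).
rewrite mem_iota ltn_ord val_eqE (negbTE Hab) => /(_ erefl) /hasP [w].
rewrite mem_iota => Hw /and3P [H1 H2 H3].
by exists (Ordinal Hw); rewrite -!val_eqE !HF.
Qed.

Lemma house_twinfree : twinfree_rel house.
Proof. by apply: (twinfree_natP (Fn := house_nat)) => //; vm_compute. Qed.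
Lemma gem_twinfree : twinfree_rel gem.
Proof. by apply: (twinfree_natP (Fn := gem_nat)) => //; vm_compute. Qed.
Lemma domino_twinfree : twinfree_rel domino.
Proof. by apply: (twinfree_natP (Fn := domino_nat)) => //; vm_compute. Qed.

Definition adj_matrix (T : Type) (e : rel T) (vs : seq T) := [seq [seq e a b | b <- vs] | a <- vs].

Lemma mx_entry_adj T (e : rel T) vs x0 i j : i < size vs -> j < size vs ->
  mx_entry (adj_matrix e vs) i j = e (nth x0 vs i) (nth x0 vs j).
Proof. by move=> Hi Hj; rewrite /mx_entry (nth_map x0) // (nth_map x0). Qed.

Definition forbidden5_free (T : finType) (e : rel T) :=
  forall vs, uniq vs -> ~~ has_forbidden5 (adj_matrix e vs).

Lemma has_induced_of_induces_at (T : finType) (g : rel T) (Fn : nat -> nat -> bool)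
    (F : rel 'I_5) M vs (x0 : T) p :
  (forall i j : 'I_5, F i j = Fn i j) -> uniq vs -> index_seq5 (size vs) p ->
  induces_at M (nat_matrix 5 Fn) p ->
  (forall i j, i < size vs -> j < size vs -> mx_entry M i j = g (nth x0 vs i) (nth x0 vs j)) ->
  has_induced F g.
Proof.
move=> HF Hu /and3P [Hpu /eqP Hps Hpa] Hind HM.
have Hlt (i : 'I_5) : nth 0 p i < size vs by apply: (allP Hpa); apply: mem_nth; rewrite Hps.
exists (fun i : 'I_5 => nth x0 vs (nth 0 p i)); split.
  move=> i j /eqP; rewrite nth_uniq ?Hlt // nth_uniq ?Hps // => /eqP H.
  exact: val_inj.
move=> i j; rewrite -HM ?Hlt // HF.
move: Hind; rewrite /induces_at all_lazyE => /allP /(_ i); rewrite mem_iota ltn_ord => /(_ erefl).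
rewrite all_lazyE => /allP /(_ j); rewrite mem_iota ltn_ord => /(_ erefl) /eqP ->.
by rewrite mx_entry_nat_matrix.
Qed.

Lemma forbidden5_free_of_DH (T : finType) (e : rel T) :
  distance_hereditary e -> distance_hereditary (compl e) -> forbidden5_free e.
Proof.
move=> [C1 [H1 [_ G1]]] [C2 [H2 [_ G2]]] [|x0 vs'] Hu; first by vm_compute.
set vs := x0 :: vs'.
have HM i j : i < size vs -> j < size vs ->
    mx_entry (adj_matrix e vs) i j = e (nth x0 vs i) (nth x0 vs j) by apply: mx_entry_adj.
have HMc i j : i < size vs -> j < size vs ->
    mx_entry (compl_matrix (adj_matrix e vs)) i j = compl e (nth x0 vs i) (nth x0 vs j).
  by move=> Hi Hj; rewrite mx_entry_compl ?size_map // HM // /compl nth_uniq.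
apply/negP; rewrite /has_forbidden5 /has_forbidden5_at has_lazyE => /hasP [p _].
rewrite size_map; case: ifP => // Hv; rewrite has_lazyE => /hasP [P].
rewrite !inE => /or3P [] /eqP -> ; case: ifP => [Hi _ | _ Hi].
- by apply: (C1 5 (leqnn 5)); apply: (has_induced_of_induces_at (fun _ _ => erefl) Hu Hv Hi HM).
- by apply: (C2 5 (leqnn 5)); apply: (has_induced_of_induces_at (fun _ _ => erefl) Hu Hv Hi HMc).
- by apply: H1; apply: (has_induced_of_induces_at (fun _ _ => erefl) Hu Hv Hi HM).
- by apply: H2; apply: (has_induced_of_induces_at (fun _ _ => erefl) Hu Hv Hi HMc).
- by apply: G1; apply: (has_induced_of_induces_at (fun _ _ => erefl) Hu Hv Hi HM).
- by apply: G2; apply: (has_induced_of_induces_at (fun _ _ => erefl) Hu Hv Hi HMc).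
Qed.

Section FiveVertexGraphs.
Variables (Fn : nat -> nat -> bool) (F : rel 'I_5).
Hypotheses (HF : forall a b : 'I_5, F a b = Fn a b) (HFforb : nat_matrix 5 Fn \in forbidden5).

Lemma induces_at_of_embedding M (h : rel 'I_5) (f : 'I_5 -> 'I_5) :
  (forall a b : 'I_5, h a b = mx_entry M a b) -> injective f ->
  (forall x y, h (f x) (f y) = F x y) ->
  let p := [seq val (f i) | i <- enum 'I_5] in
  [/\ index_seq5 5 p, p \in permutations (iota 0 5) & induces_at M (nat_matrix 5 Fn) p].
Proof.
move=> Hh finj Hf p.
have Hpu : uniq p by rewrite map_inj_uniq ?enum_uniq // => x y /val_inj /finj.
have Hps : size p = 5 by rewrite size_map size_enum_ord.
have Hpa : all (fun i => i < 5) p by apply/allP => x /mapP [i _ ->]; apply: ltn_ord.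
have Hnth k : k < 5 -> nth 0 p k = val (f (inord k)).
  by move=> Hk; rewrite (nth_map ord0) ?size_enum_ord // -{1}(inordK Hk) nth_ord_enum.
split.
- by rewrite /index_seq5 Hpu Hps Hpa.
- rewrite mem_permutations; apply: uniq_perm; [done | exact: iota_uniq | ].
  have Hsub : {subset p <= iota 0 5} by move=> x Hx; rewrite mem_iota; apply: (allP Hpa).
  by apply: (uniq_min_size Hpu Hsub _).2; rewrite Hps size_iota.
rewrite /induces_at all_lazyE; apply/allP => i; rewrite mem_iota => Hi.
rewrite all_lazyE; apply/allP => j; rewrite mem_iota => Hj.
by rewrite !Hnth // -Hh Hf HF mx_entry_nat_matrix // !inordK.
Qed.

Lemma has_forbidden5_of_induced M (g : rel 'I_5) : size M = 5 ->
  (forall a b : 'I_5, g a b = mx_entry M a b) ->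
  has_induced F g \/ has_induced F (compl g) -> has_forbidden5 M.
Proof.
move=> HM Hg Hh.
have Hc (a b : 'I_5) : compl g a b = mx_entry (compl_matrix M) a b.
  by rewrite mx_entry_compl ?HM ?ltn_ord // /compl val_eqE Hg.
rewrite /has_forbidden5 /has_forbidden5_at HM has_lazyE.
case: Hh => [[f [finj Hf]] | [f [finj Hf]]].
  case: (induces_at_of_embedding Hg finj Hf) => Hv Hp Hi.
  apply/hasP; exists [seq val (f i) | i <- enum 'I_5] => //; rewrite Hv has_lazyE.
  by apply/hasP; exists (nat_matrix 5 Fn) => //; rewrite Hi.
case: (induces_at_of_embedding Hc finj Hf) => Hv Hp Hi.
apply/hasP; exists [seq val (f i) | i <- enum 'I_5] => //; rewrite Hv has_lazyE.
by apply/hasP; exists (nat_matrix 5 Fn) => //; rewrite Hi; case: ifP.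
Qed.

Lemma bull_no_induced : ~ has_induced F bull /\ ~ has_induced F (compl bull).
Proof.
have Hb (a b : 'I_5) : bull a b = mx_entry (nat_matrix 5 bull_nat) a b.
  by rewrite mx_entry_nat_matrix.
have Hfree : ~~ has_forbidden5 (nat_matrix 5 bull_nat) by vm_compute.
by split=> H; move/negP: Hfree; apply; apply: has_forbidden5_of_induced Hb _; auto.
Qed.

End FiveVertexGraphs.

Lemma iso_induced_sub_of_adj_matrix (T : finType) (e : rel T) (S : {set T}) vs q :
  uniq vs -> {subset S <= vs} -> size q = size vs -> uniq q -> all (fun a => a < 5) q ->
  adj_matrix e vs = adj_matrix bull_nat q -> iso_induced_sub e S bull.
Proof.
move=> Hu HS Hq Hqu Hqa HM.
have Hidx y : y \in S -> index y vs < size vs by move/HS; rewrite index_mem.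
have Hq5 y : y \in S -> nth 0 q (index y vs) < 5.
  by move=> Hy; apply: (allP Hqa); apply: mem_nth; rewrite Hq Hidx.
exists (fun y => inord (nth 0 q (index y vs)) : 'I_5); split.
  move=> y y' Hy Hy' /(congr1 val) /=; rewrite !inordK ?Hq5 // => /eqP.
  rewrite nth_uniq ?Hq ?Hidx // => /eqP Hi.
  by rewrite -(nth_index y (HS _ Hy)) Hi nth_index // HS.
move=> y y' Hy Hy'.
change (bull_nat (inord (nth 0 q (index y vs)) : 'I_5) (inord (nth 0 q (index y' vs)) : 'I_5)
  = e y y').
rewrite !inordK ?Hq5 // -(mx_entry_adj _ 0) ?Hq ?Hidx // -HM (mx_entry_adj _ y) ?Hidx //.
by rewrite !nth_index ?HS.
Qed.

(** * Twin-free graphs without forbidden configurations *)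

Section TwinfreeGraphs.
Variables (T : finType) (e : rel T).
Hypotheses (eS : symmetric e) (eI : irreflexive e) (e_free : forbidden5_free e).

(* A module with two vertices contains a P4 (it is twin-free); a vertex outside
   the module would complete it to a gem or a co-gem. *)
Lemma module_card_le1 S M : twinfree_in e S -> is_module e S M -> ~~ (S \subset M) ->
  #|M| <= 1.
Proof.
move=> Htf HM /subsetPn [w HwS HwM]; rewrite leqNgt; apply/negP => HM1.
have/has_P4P [a [b [c [d [Ha Hb Hc Hd Hp]]]]] :=
  twinfree_has_P4 eS (twinfree_in_module HM Htf) HM1.
have Hu : uniq [:: a; b; c; d; w].
  have := induced_P4_uniq eS eI Hp; rewrite /= !inE !negb_or.
  have nw x : x \in M -> x != w by apply: contraTneq => ->.
  by case/and4P=> /and3P [-> -> ->] /andP [-> ->] -> _; rewrite !nw.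
have [Hbw Hcw Hdw] : [/\ e b w = e a w, e c w = e a w & e d w = e a w].
  by split; apply: HM.2.
case/and5P: Hp => h1 h2 h3 /negbTE h4 /andP [/negbTE h5 /negbTE h6].
have : adj_matrix e [:: a; b; c; d; w] = P4_plus1 [:: e a w; e a w; e a w; e a w].
  rewrite /adj_matrix /P4_plus1 /= !eI (eS b a) (eS c a) (eS c b) (eS d a) (eS d b) (eS d c).
  by rewrite (eS w a) (eS w b) (eS w c) (eS w d) Hbw Hcw Hdw h1 h2 h3 h4 h5 h6.
by move/(congr1 has_forbidden5); rewrite P4_plus1_uniform => E; move: (e_free Hu); rewrite E.
Qed.

Section AroundP4.
Variables (S : {set T}) (p1 p2 p3 p4 : T).
Hypotheses (S_tf : twinfree_in e S) (P4p : induced_P4 e p1 p2 p3 p4)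
  (psS : {subset [:: p1; p2; p3; p4] <= S}).

Let ps := [:: p1; p2; p3; p4].
Let pattern y := [seq e y p | p <- ps].

Lemma adj_matrix_P4 : adj_matrix e ps = P4_matrix.
Proof.
case/and5P: P4p => h12 h23 h34 /negbTE n13 /andP [/negbTE n14 /negbTE n24].
rewrite /adj_matrix /= !eI (eS p2 p1) (eS p3 p1) (eS p3 p2) (eS p4 p1) (eS p4 p2) (eS p4 p3).
by rewrite h12 h23 h34 n13 n14 n24.
Qed.

Lemma adj_matrix_P4_plus1 y : adj_matrix e (ps ++ [:: y]) = P4_plus1 (pattern y).
Proof.
case/and5P: P4p => h12 h23 h34 /negbTE n13 /andP [/negbTE n14 /negbTE n24].
rewrite /adj_matrix /P4_plus1 /= !eI (eS p2 p1) (eS p3 p1) (eS p3 p2) (eS p4 p1) (eS p4 p2).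
by rewrite (eS p4 p3) h12 h23 h34 n13 n14 n24 (eS p1 y) (eS p2 y) (eS p3 y) (eS p4 y).
Qed.

Lemma adj_matrix_P4_plus2 y z :
  adj_matrix e (ps ++ [:: y; z]) = P4_plus2 (pattern y) (pattern z) (e y z).
Proof.
case/and5P: P4p => h12 h23 h34 /negbTE n13 /andP [/negbTE n14 /negbTE n24].
rewrite /adj_matrix /P4_plus2 /= !eI (eS p2 p1) (eS p3 p1) (eS p3 p2) (eS p4 p1) (eS p4 p2).
rewrite (eS p4 p3) h12 h23 h34 n13 n14 n24 (eS p1 y) (eS p2 y) (eS p3 y) (eS p4 y).
by rewrite (eS p1 z) (eS p2 z) (eS p3 z) (eS p4 z) (eS z y).
Qed.

Lemma pattern_cases y : y \notin ps ->
  pattern y = bull_pattern \/ exists2 i, i < 4 & pattern y \in twin_patterns i.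
Proof.
move=> Hy; apply: P4_plus1_cases; first by rewrite size_map.
rewrite -adj_matrix_P4_plus1; apply: e_free.
by rewrite cat_uniq (induced_P4_uniq eS eI P4p) /= orbF Hy.
Qed.

Lemma twin_pattern_adj y z i : y \notin ps -> z \notin ps -> y != z -> i < 4 ->
  pattern y \in twin_patterns i -> pattern z \notin twin_patterns i ->
  e y z = e (nth p1 ps i) z.
Proof.
move=> Hy Hz Hyz Hi Hty Htz.
have Hu : uniq (ps ++ [:: y; z]).
  by rewrite cat_uniq (induced_P4_uniq eS eI P4p) /= orbF negb_or Hy Hz inE Hyz.
move: (e_free Hu); rewrite adj_matrix_P4_plus2.
move/(P4_plus2_twin (size_map (e y) ps) (size_map (e z) ps) Hi Hty Htz) => ->.
by rewrite (nth_map p1) // eS.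
Qed.

Let twin_class i :=
  [set x in S | (x == nth p1 ps i) || ((x \notin ps) && (pattern x \in twin_patterns i))].

Lemma twin_class_module i : i < 4 -> is_module e S (twin_class i).
Proof.
move=> Hi; pose pi := nth p1 ps i.
suff K x z : x \in twin_class i -> z \in S -> z \notin twin_class i -> e x z = e pi z.
  split; first by apply/subsetP => x; rewrite in_set => /andP [].
  by move=> y y' z Hy Hy' Hz Hzn; rewrite !K.
rewrite !in_set => /andP [HxS /orP [/eqP -> //|/andP [Hxn Hxt]]] HzS.
rewrite HzS negb_or /= => /andP [Hzi Hzo].
have [Hzp|Hzn] := boolP (z \in ps); last first.
  have Hxz : x != z by apply: contraNneq Hzo => <-; rewrite Hxn.
  by apply: twin_pattern_adj => //; move: Hzo; rewrite Hzn.
have Hj : index z ps < 4 by rewrite -index_mem in Hzp.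
have Hij : i != index z ps by apply: contraNneq Hzi => ->; rewrite /pi nth_index.
rewrite -(nth_index p1 Hzp) -(nth_map p1 false (e x)) // (twin_patterns_off_diag Hi Hj Hxt Hij).
by rewrite -adj_matrix_P4 (mx_entry_adj _ p1).
Qed.

Lemma no_twin_pattern y i : y \in S -> y \notin ps -> i < 4 -> pattern y \notin twin_patterns i.
Proof.
move=> Hy Hyn Hi; apply/negP => Hty.
have Hu := induced_P4_uniq eS eI P4p.
pose j := if i == 0 then 1 else 0.
have Hj : j < 4 by rewrite /j; case: (i == 0).
have Hji : j != i by rewrite /j; case: i Hi {Hty j Hj}.
have Hout : ~~ (S \subset twin_class i).
  apply/subsetPn; exists (nth p1 ps j); first by apply/psS/mem_nth.
  by rewrite in_set mem_nth //= orbF nth_uniq // (negbTE Hji) andbF.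
move: (module_card_le1 S_tf (twin_class_module Hi) Hout); rewrite leqNgt => /negP; apply.
apply/card_gt1P; exists (nth p1 ps i), y; split.
- by rewrite in_set psS ?mem_nth ?eqxx.
- by rewrite in_set Hy Hyn Hty orbT.
- by apply: contraNneq Hyn => <-; rewrite mem_nth.
Qed.

Lemma vertex_outside_P4_unique y z : y \in S -> z \in S -> y \notin ps -> z \notin ps -> y = z.
Proof.
have HB x : x \in S -> x \notin ps -> pattern x = bull_pattern.
  move=> Hx Hxn; case: (pattern_cases Hxn) => // [[i Hi Hti]].
  by move: (no_twin_pattern Hx Hxn Hi); rewrite Hti.
pose M := [set x in S | x \notin ps].
have HM : is_module e S M.
  split; first by apply/subsetP => x; rewrite in_set => /andP [].
  move=> y1 y2 w; rewrite !in_set => /andP [Hy1 Hy1n] /andP [Hy2 Hy2n] ->; rewrite negbK => Hwp.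
  rewrite -(nth_index p1 Hwp) -!(nth_map p1 false) ?index_mem //.
  by rewrite -/(pattern y1) -/(pattern y2) !HB.
have Hout : ~~ (S \subset M).
  by apply/subsetPn; exists p1; rewrite ?psS ?mem_head // in_set mem_head andbF.
move=> Hy Hz Hyn Hzn.
by apply: (card_le1_eqP (module_card_le1 S_tf HM Hout)); rewrite in_set ?Hy ?Hyn ?Hz ?Hzn.
Qed.

Lemma iso_bull_around_P4 : iso_induced_sub e S bull.
Proof.
have Hu := induced_P4_uniq eS eI P4p.
have [x /andP [HxS Hxn] | Hnone] := pickP [pred x in S | x \notin ps].
  apply: (@iso_induced_sub_of_adj_matrix _ _ _ (ps ++ [:: x]) [:: 3; 0; 1; 4; 2]) => //.
  - by rewrite cat_uniq Hu /= orbF Hxn.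
  - move=> y Hy; rewrite mem_cat; have [//|Hyn] := boolP (y \in ps).
    by rewrite inE (vertex_outside_P4_unique Hy HxS Hyn Hxn) eqxx.
  rewrite adj_matrix_P4_plus1; case: (pattern_cases Hxn) => [-> //|[i Hi Hti]].
  by move: (no_twin_pattern HxS Hxn Hi); rewrite Hti.
apply: (@iso_induced_sub_of_adj_matrix _ _ _ ps [:: 3; 0; 1; 4]) => //; last first.
  by rewrite adj_matrix_P4.
move=> y Hy; have [//|Hyn] := boolP (y \in ps).
by move: (Hnone y); rewrite /= Hy Hyn.
Qed.

End AroundP4.

Lemma twinfree_iso_bull S : twinfree_in e S -> 1 < #|S| -> iso_induced_sub e S bull.
Proof.
move=> Htf HS; have /has_P4P [p1 [p2 [p3 [p4 [H1 H2 H3 H4 Hp]]]]] := twinfree_has_P4 eS Htf HS.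
by apply: (iso_bull_around_P4 Htf Hp) => x; rewrite !inE => /or4P [] /eqP ->.
Qed.

End TwinfreeGraphs.

Lemma iso_bull_card_le1 (T : finType) (e : rel T) (S : {set T}) : irreflexive e ->
  #|S| <= 1 -> iso_induced_sub e S bull.
Proof.
move=> eI HS; exists (fun _ => ord0); split; first by move=> x y Hx Hy _; apply: (card_le1_eqP HS).
by move=> x y Hx Hy; rewrite (card_le1_eqP HS x y Hx Hy) eI.
Qed.

Lemma twin_elim_iso_bull (T : finType) (e : rel T) : symmetric e -> irreflexive e ->
  forbidden5_free e -> forall S, exists S', twin_elim e S S' /\ iso_induced_sub e S' bull.
Proof.
move=> eS eI e_free S; have [n] := ubnP #|S|; elim: n S => // n IH S HSn.
have [/existsP [u /existsP [v Htw]]|Hno] := boolP [exists u, exists v, twins_in e S v u].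
  have HvS : v \in S by case/and4P: Htw.
  have [|S' [HS' Hiso]] := IH (S :\ v); first by move: HSn; rewrite (cardsD1 v S) HvS.
  by exists S'; split=> //; apply: twin_elim_step Htw HS'.
exists S; split; first exact: twin_elim_refl.
have [HS1|HS1] := leqP #|S| 1; first exact: iso_bull_card_le1.
apply: twinfree_iso_bull => // u v; apply: contra Hno => Htw.
by apply/existsP; exists v; apply/existsP; exists u.
Qed.

Lemma has_induced_card (U V : finType) (F : rel U) (g : rel V) : has_induced F g -> #|U| <= #|V|.
Proof. by case=> f [finj _]; apply: leq_card finj. Qed.

Lemma DH_coDH_of_twin_elim_bull (T : finType) (e : rel T) S : symmetric e -> irreflexive e ->
  twin_elim e [set: T] S -> iso_induced_sub e S bull ->
  distance_hereditary e /\ distance_hereditary (compl e).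
Proof.
move=> eS eI Hel Hiso.
have Hno (U : finType) (F : rel U) : twinfree_rel F ->
    ~ has_induced F bull -> ~ has_induced F (compl bull) ->
    ~ has_induced F e /\ ~ has_induced F (compl e).
  by move=> Htf; exact: (twin_elim_bull_no_induced Htf eS eI Hel Hiso).
have big m (F : rel 'I_m) (g : rel 'I_5) : 5 < m -> ~ has_induced F g.
  by move=> Hm /has_induced_card; rewrite !card_ord; lia.
have Hcyc n : 5 <= n -> ~ has_induced (cycle_rel n) e /\ ~ has_induced (cycle_rel n) (compl e).
  move=> Hn.
  suff [B1 B2] : ~ has_induced (cycle_rel n) bull /\ ~ has_induced (cycle_rel n) (compl bull).
    exact: Hno (cycle_twinfree Hn) B1 B2.
  have [H5|H5] := ltnP 5 n; first by split; apply: big.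
  have E : n = 5 by lia.
  by subst n; apply: (bull_no_induced (Fn := C5_nat)).
have [Bh1 Bh2] := bull_no_induced (Fn := house_nat) (F := house) (fun _ _ => erefl) erefl.
have [Bg1 Bg2] := bull_no_induced (Fn := gem_nat) (F := gem) (fun _ _ => erefl) erefl.
have [Hh1 Hh2] := Hno _ _ house_twinfree Bh1 Bh2.
have [Hg1 Hg2] := Hno _ _ gem_twinfree Bg1 Bg2.
have [Hd1 Hd2] := Hno _ _ domino_twinfree (big _ _ _ (ltnSn 5)) (big _ _ _ (ltnSn 5)).
by do 2?split=> //; move=> n Hn; case: (Hcyc n Hn).
Qed.

Theorem mainTheorem7 (T : finType) (e : rel T) :
  symmetric e -> irreflexive e -> connected_graph e ->
  ((distance_hereditary e /\ distance_hereditary (compl e)) <->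
   exists S : {set T}, twin_elim e [set: T] S /\ iso_induced_sub e S bull).
Proof.
move=> eS eI _; split.
- case=> D1 D2; apply: twin_elim_iso_bull => //.
  exact: forbidden5_free_of_DH.
- by case=> S [Hel Hiso]; apply: DH_coDH_of_twin_elim_bull Hel Hiso.
Qed.
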